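(* Let $M$ be a multiplicity free object of a nonzero finite abelian category $\mathcal C$ over $\mathbb F$. Then $M$ is rigid if and only if for every $\sigma\in\mathrm{JH}(M)$ there is an extension path in the radical filtration of length $\ell\ell(M)-1-d^M_{\mathrm{rad}}(\sigma)$ beginning with $\sigma$. Also, $M$ is rigid if and only if for every $\sigma\in\mathrm{JH}(M)$ there is an extension path in the socle filtration of length $\ell\ell(M)-1-d_M^{\mathrm{soc}}(\sigma)$ ending with $\sigma$.
   Context: $\mathcal C$ is an $\mathbb F$-linear abelian category all of whose objects have finite length. Radical filtration: $\mathrm{rad}^0M=M$, $\mathrm{rad}^nM=\mathrm{rad}(\mathrm{rad}^{n-1}M)$; socle filtration: $\mathrm{soc}_{-1}M=0$, $\mathrm{soc}_nM$ = preimage of $\mathrm{soc}(M/\mathrm{soc}_{n-1}M)$. The Loewy length $\ell\ell(M)$ is the common length of these filtrations (number of nonzero graded pieces). $M$ is rigid if $\mathrm{rad}^nM=\mathrm{soc}_{\ell\ell(M)-n-1}M$ for all $n$. For $M$ multiplicity free and $\sigma\in\mathrm{JH}(M)$, $d^M_{\mathrm{rad}}(\sigma)$ (resp. $d_M^{\mathrm{soc}}(\sigma)$) is the unique $n$ with $\sigma$ a constituent of $\mathrm{rad}^nM/\mathrm{rad}^{n+1}M$ (resp. $\mathrm{soc}_nM/\mathrm{soc}_{n-1}M$). $\sigma$ points to $\sigma'$ if the subquotient of $M$ which is an extension $0\to\sigma'\to X\to\sigma\to0$ is nonsplit; for a filtration $\mathscr F$, $\sigma$ $\mathscr F$-points to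 $\sigma'$ if moreover the filtration induced by $\mathscr F$ on $X$ has exactly two nonzero graded pieces. An extension path in $\mathscr F$ of length $n$ is a sequence $\sigma_0\to\dots\to\sigma_n$ with each $\sigma_k$ $\mathscr F$-pointing to $\sigma_{k+1}$; it begins with $\sigma_0$ and ends with $\sigma_n$. *)

(* A finite abelian category over a field F is equivalent to
   the category of finite-dimensional modules over a finite-dimensional
   F-algebra.  We model the object M as the module F^n (row vectors
   'rV[F]_n) on which the algebra acts through the matrices in the list As
   (generators of the image of the algebra in 'M[F]_n).  Submodules of M are
   row spaces (square matrices, %MS) stable under all A in As. *)
From HB Require Import structures.
From mathcomp Require Import all_boot all_order all_algebra.
Set Implicit Arguments.
Unset Strict Implicit.
Unset Printing Implicit Defensive.
Import GRing.Theory.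
Local Open Scope ring_scope.

Section Defs.
Variables (F : fieldType) (n : nat) (As : seq 'M[F]_n).

Definition submod (U : 'M[F]_n) : bool := all (fun A => (U *m A <= U)%MS) As.

Definition simple_sq (U V : 'M[F]_n) : Prop :=
  [/\ submod U, submod V, (U <= V)%MS, (\rank U < \rank V)%N &
      forall W, submod W -> (U <= W <= V)%MS -> (W == U)%MS \/ (W == V)%MS].

(* V1/U1 is isomorphic (as a module) to V2/U2: the isomorphism is induced by
   a linear map f : F^n -> F^n *)
Definition iso_sq (U1 V1 U2 V2 : 'M[F]_n) : Prop :=
  exists f : 'M[F]_n,
    [/\ (V1 *m f <= V2)%MS, (U1 *m f <= U2)%MS, (V2 <= V1 *m f + U2)%MS,
        (V1 :&: kermx (f *m cokermx U2) <= U1)%MS &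
        forall A, A \in As -> (V1 *m (A *m f - f *m A) <= U2)%MS].

Definition mult_free : Prop :=
  exists (k : nat) (c : nat -> 'M[F]_n),
    [/\ (c 0%N == (0 : 'M[F]_n))%MS, (c k == 1%:M)%MS,
        (forall i, (i < k)%N -> simple_sq (c i) (c i.+1)) &
        forall i j, (i < k)%N -> (j < k)%N ->
          iso_sq (c i) (c i.+1) (c j) (c j.+1) -> i = j].

(* R = rad N : intersection of the maximal submodules of the submodule N *)
Definition is_rad (N R : 'M[F]_n) : Prop :=
  [/\ submod R, (R <= N)%MS,
      (forall W, simple_sq W N -> (R <= W)%MS) &
      exists Ws : seq 'M[F]_n, (forall W, W \in Ws -> simple_sq W N) /\
        ((\bigcap_(W <- Ws) W) :&: N <= R)%MS].

(* X/U = soc(N/U), i.e. X is the preimage in N of the socle of N/U *)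
Definition is_soc_over (U N X : 'M[F]_n) : Prop :=
  [/\ submod X, (U <= X <= N)%MS,
      (forall W, simple_sq U W -> (W <= N)%MS -> (W <= X)%MS) &
      exists Ws : seq 'M[F]_n,
        (forall W, W \in Ws -> simple_sq U W /\ (W <= N)%MS) /\
        (X <= U + \sum_(W <- Ws) W)%MS].

(* R k = rad^k M *)
Definition rad_filt (R : nat -> 'M[F]_n) : Prop :=
  (R 0%N == 1%:M)%MS /\ forall k, is_rad (R k) (R k.+1).

(* T k = soc_{k-1} M  (so T 0 = soc_{-1} M = 0) *)
Definition soc_filt (T : nat -> 'M[F]_n) : Prop :=
  (T 0%N == (0 : 'M[F]_n))%MS /\ forall k, is_soc_over (T k) 1%:M (T k.+1).

Definition loewy_length (R : nat -> 'M[F]_n) (L : nat) : Prop :=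
  (R L == (0 : 'M[F]_n))%MS /\ forall k, (k < L)%N -> ~~ (R k == (0 : 'M[F]_n))%MS.

(* rad^k M = soc_{L-k-1} M for all k *)
Definition rigid (R T : nat -> 'M[F]_n) (L : nat) : Prop :=
  forall k, (k <= L)%N -> (R k == T (L - k)%N)%MS.

Definition constituent (A B U V : 'M[F]_n) : Prop :=
  exists U' V', simple_sq U' V' /\ (A <= U')%MS /\ (V' <= B)%MS /\
    iso_sq U' V' U V.

(* sigma1 = V1/U1 points to sigma2 = V2/U2 inside the subquotient Y/X of M,
   with moreover the filtration (hi k, lo k) (graded piece hi k / lo k,
   k < L) inducing exactly two nonzero graded pieces on Y/X *)
Definition fpoints (hi lo : nat -> 'M[F]_n) (L : nat)
    (U1 V1 U2 V2 : 'M[F]_n) : Prop :=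
  exists X W Y : 'M[F]_n,
    [/\ [&& submod X, submod W, submod Y & (X <= W <= Y)%MS],
        iso_sq X W U2 V2, iso_sq W Y U1 V1,
        ~ (exists W', [/\ submod W', (X <= W' <= Y)%MS,
                          (W' :&: W <= X)%MS & (Y <= W' + W)%MS]) &
        count (fun k => ~~ ((hi k :&: Y) + X <= (lo k :&: Y) + X)%MS)
              (iota 0 L) = 2%N].

Definition rad_points (R : nat -> 'M[F]_n) L :=
  fpoints R (fun k => R k.+1) L.
Definition soc_points (T : nat -> 'M[F]_n) L :=
  fpoints (fun k => T k.+1) T L.

Definition ext_path (pts : 'M[F]_n -> 'M[F]_n -> 'M[F]_n -> 'M[F]_n -> Prop)
    (m : nat) (p : nat -> 'M[F]_n * 'M[F]_n) : Prop :=
  (forall k, (k <= m)%N -> simple_sq (p k).1 (p k).2) /\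
  (forall k, (k < m)%N -> pts (p k).1 (p k).2 (p k.+1).1 (p k.+1).2).

End Defs.

From HB Require Import structures.
From mathcomp Require Import all_boot all_order all_algebra.
From Stdlib Require Classical_Prop.
From mathcomp Require Import zify.
Set Implicit Arguments.
Unset Strict Implicit.
Unset Printing Implicit Defensive.
Import GRing.Theory.
Local Open Scope ring_scope.

(* Fix a composition series 0 = c_0 < ... < c_len = M with pairwise
   non-isomorphic factors.  A simple subquotient V/U is isomorphic to the
   factor c_(i+1)/c_i for exactly one i, namely the one with
   c_(i+1) <= V + c_i but not c_(i+1) <= U + c_i.  Hence each factor has a
   well-defined radical layer a and socle layer b; rad^k M <= soc_(L-k-1) M
   gives a + b <= L - 1, with equality for every factor iff M is rigid.
   If V/U points to V'/U', the radical layer strictly increases and the socle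
   layer strictly decreases.  So a radical path of length L-1-a from a factor
   of radical layer a forces its socle layer up to L-1-a, and dually; this
   gives rigidity.  Conversely, when M is rigid a factor in layer d < L-1 is
   the top (resp. bottom) of a nonsplit extension whose other factor lies in
   layer d+1, obtained from a minimal (resp. maximal) submodule; iterating
   builds the paths. *)

(* Bounded search for inclusions between sums and intersections of row
   spaces, chaining through hypotheses [X <= _]. *)
Ltac submx_lattice_ n :=
  lazymatch n with
  | O => fail
  | S ?m =>
   first [ apply: submx_refl
   | lazymatch goal with |- is_true (_ && _) => apply/andP; split; submx_lattice_ n end
   | apply: submx1 | apply: sub0mx
   | match goal with
     | |- is_true (_ <= (_ :&: _))%MS => rewrite sub_capmx; apply/andP; split; submx_lattice_ n
     | |- is_true ((_ + _) <= _)%MS => rewrite addsmx_sub; apply/andP; split; submx_lattice_ n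
     end
   | match goal with
     | |- is_true ((?A :&: ?B) <= _)%MS =>
         first [ apply: (submx_trans (capmxSl A B)); submx_lattice_ m
               | apply: (submx_trans (capmxSr A B)); submx_lattice_ m ]
     end
   | match goal with
     | |- is_true (_ <= (?A + ?B))%MS =>
         first [ apply: (submx_trans _ (addsmxSl A B)); submx_lattice_ m
               | apply: (submx_trans _ (addsmxSr A B)); submx_lattice_ m ]
     end
   | match goal with
     | H : is_true (?X <= _)%MS |- is_true (?X <= _)%MS => apply: (submx_trans H); submx_lattice_ m
     end ]
  end.
Ltac submx_lattice := submx_lattice_ constr:(4%N).

Lemma subr_regroup (M : zmodType) (a b c d : M) : a - b = (c - d) - (c - a) - (b - d).
Proof. by rewrite !opprB [c - d + _]addrC (addrA (a - c)) subrK addrA subrK. Qed.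

Lemma ex_falling_edge (b : nat -> bool) m :
  b 0%N -> ~~ b m -> exists2 t, (t < m)%N & b t && ~~ b t.+1.
Proof.
elim: m => [-> //|m IH] b0 bm.
case bmm: (b m); first by exists m => //; rewrite bmm.
have [t tm ht] := IH b0 (negbT bmm); exists t => //; exact: ltnW.
Qed.

Lemma count_iota_pred2 (a b m : nat) : a != b -> (a < m)%N -> (b < m)%N ->
  count (fun t => (t == a) || (t == b)) (iota 0 m) = 2%N.
Proof.
move=> ab am bm.
have := count_predUI (pred1 a) (pred1 b) (iota 0 m).
rewrite !count_uniq_mem ?iota_uniq // !mem_iota /= am bm.
have -> : count (predI (pred1 a) (pred1 b)) (iota 0 m) = 0%N.
  rewrite (eq_count (a2 := pred0)) ?count_pred0 // => t /=.
  by case: (eqVneq t a) => [->|] //=; rewrite (negbTE ab).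
by rewrite addn0.
Qed.

Lemma layer_chain_inc (P : nat -> nat -> Prop) m :
  (forall k, (k <= m)%N -> exists b, P k b) ->
  (forall k b b', (k < m)%N -> P k b -> P k.+1 b' -> (b < b')%N) ->
  forall b, P m b -> (m <= b)%N.
Proof.
move=> ex inc; suff H t : (t <= m)%N -> forall b, P t b -> (t <= b)%N by exact: H.
elim: t => [//|t IH] tm b hb.
have [b0 hb0] := ex t (ltnW tm).
exact: leq_ltn_trans (IH (ltnW tm) b0 hb0) (inc t b0 b tm hb0 hb).
Qed.

Lemma layer_chain_dec (P : nat -> nat -> Prop) m :
  (forall k, (k <= m)%N -> exists b, P k b) ->
  (forall k b b', (k < m)%N -> P k b -> P k.+1 b' -> (b' < b)%N) ->
  forall b, P 0%N b -> (m <= b)%N.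
Proof.
move=> ex dec b hb.
apply: (layer_chain_inc (P := fun k => P (m - k)%N)); last by rewrite subnn.
  by move=> k km; apply: ex; exact: leq_subr.
move=> k b0 b1 km h0 h1.
have e : (m - k.+1).+1 = (m - k)%N by lia.
by apply: (dec (m - k.+1)%N b1 b0); [lia | | rewrite e].
Qed.

Section Submodules.
Variables (F : fieldType) (n : nat) (As : seq 'M[F]_n).
Local Notation subm := (submod As).
Implicit Types U V W X Y Z A B C : 'M[F]_n.

Lemma eqmxb_refl A : (A == A)%MS.
Proof. by rewrite submx_refl. Qed.

Lemma eqmxb_sym A B : (A == B)%MS -> (B == A)%MS.
Proof. by case/andP => h1 h2; rewrite h1 h2. Qed.

Lemma submodP U : reflect (forall A, A \in As -> (U *m A <= U)%MS) (subm U).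
Proof. exact: allP. Qed.

Lemma submodM U A : subm U -> A \in As -> (U *m A <= U)%MS.
Proof. by move/submodP; apply. Qed.

Lemma submod0 : subm 0.
Proof. by apply/submodP => A _; rewrite mul0mx sub0mx. Qed.

Lemma submod1 : subm 1%:M.
Proof. by apply/submodP => A _; rewrite submx1. Qed.

Lemma submodD U V : subm U -> subm V -> subm (U + V)%MS.
Proof.
move=> /submodP hU /submodP hV; apply/submodP => A hA.
rewrite addsmxMr addsmxS //; [exact: hU|exact: hV].
Qed.

Lemma submodI U V : subm U -> subm V -> subm (U :&: V)%MS.
Proof.
move=> /submodP hU /submodP hV; apply/submodP => A hA.
rewrite sub_capmx; apply/andP; split.
  exact: submx_trans (submxMr _ (capmxSl _ _)) (hU _ hA).
exact: submx_trans (submxMr _ (capmxSr _ _)) (hV _ hA).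
Qed.

Lemma eqmx_submod U V : (U == V)%MS -> subm U -> subm V.
Proof.
move=> /andP[uv vu] /submodP hU; apply/submodP => A hA.
exact: submx_trans (submxMr _ vu) (submx_trans (hU _ hA) uv).
Qed.

Lemma submod_bigcap (Ws : seq 'M[F]_n) : (forall W, W \in Ws -> subm W) ->
  subm (\bigcap_(W <- Ws) W)%MS.
Proof.
elim: Ws => [|W Ws IH] H; rewrite ?big_nil ?big_cons; first exact: submod1.
apply: submodI; first by apply: H; exact: mem_head.
by apply: IH => W0 h; apply: H; rewrite in_cons h orbT.
Qed.

Lemma submod_bigsum (Ws : seq 'M[F]_n) : (forall W, W \in Ws -> subm W) ->
  subm (\sum_(W <- Ws) W)%MS.
Proof.
elim: Ws => [|W Ws IH] H; rewrite ?big_nil ?big_cons; first exact: submod0.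
apply: submodD; first by apply: H; exact: mem_head.
by apply: IH => W0 h; apply: H; rewrite in_cons h orbT.
Qed.

Lemma ltn_rank_submx U V : (U <= V)%MS -> (\rank U < \rank V)%N = ~~ (V <= U)%MS.
Proof. by move=> uv; rewrite (ltn_leqif (mxrank_leqif_sup uv)). Qed.

Lemma simple_sqP U V : simple_sq As U V ->
  [/\ subm U, subm V, (U <= V)%MS, ~~ (V <= U)%MS &
      forall W, subm W -> (U <= W)%MS -> (W <= V)%MS -> (W <= U)%MS \/ (V <= W)%MS].
Proof.
case=> su sv uv r h; split => //; first by rewrite -ltn_rank_submx.
move=> W sW uw wv; case: (h W sW); first by rewrite uw wv.
  by move=> /andP[]; left.
by move=> /andP[]; right.
Qed.

Lemma simple_sqI U V : subm U -> subm V -> (U <= V)%MS -> ~~ (V <= U)%MS ->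
  (forall W, subm W -> (U <= W)%MS -> (W <= V)%MS -> (W <= U)%MS \/ (V <= W)%MS) ->
  simple_sq As U V.
Proof.
move=> su sv uv nvu h; split => //; first by rewrite ltn_rank_submx.
move=> W sW /andP[uw wv]; case: (h W sW uw wv) => H.
  by left; rewrite H.
by right; rewrite wv.
Qed.

Lemma eqmx_simple_sq U V U' V' : (U == U')%MS -> (V == V')%MS ->
  simple_sq As U V -> simple_sq As U' V'.
Proof.
move=> /andP[a1 a2] /andP[b1 b2] /simple_sqP[su sv uv nvu h].
apply: simple_sqI.
- by apply: eqmx_submod su; rewrite a1 a2.
- by apply: eqmx_submod sv; rewrite b1 b2.
- exact: submx_trans a2 (submx_trans uv b1).
- by apply: contra nvu => H; exact: submx_trans b1 (submx_trans H a2).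
move=> W sW uw wv.
case: (h W sW (submx_trans a1 uw) (submx_trans wv b2)) => H.
  by left; exact: submx_trans H a1.
by right; exact: submx_trans b2 H.
Qed.

Lemma simple_sq_cap U V X : simple_sq As U V -> subm X -> (X <= V)%MS ->
  (X <= U)%MS \/ simple_sq As (X :&: U)%MS X.
Proof.
move=> /simple_sqP[su sv uv nvu h] sX xv.
case: (h (X + U)%MS (submodD sX su) (addsmxSr _ _) _); first by rewrite addsmx_sub xv uv.
  by rewrite addsmx_sub => /andP[H _]; left.
move=> vxu; right; apply: simple_sqI.
- exact: submodI.
- exact: sX.
- exact: capmxSl.
- rewrite sub_capmx submx_refl /=; apply: contra nvu => xu.
  by rewrite (submx_trans vxu) // addsmx_sub xu submx_refl.
move=> W sW wl wx.
case: (h (W + U)%MS (submodD sW su) (addsmxSr _ _) _); first by rewrite addsmx_sub uv (submx_trans wx xv).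
  by rewrite addsmx_sub => /andP[wu _]; left; rewrite sub_capmx wx wu.
move=> vwu; right.
have: (X <= (W + U) :&: X)%MS by rewrite sub_capmx submx_refl (submx_trans xv vwu).
rewrite -(matrix_modl _ wx); move/submx_trans; apply.
by rewrite addsmx_sub submx_refl capmxC wl.
Qed.

Lemma simple_sq_adds U X : simple_sq As (X :&: U)%MS X -> subm U ->
  simple_sq As U (X + U)%MS.
Proof.
move=> /simple_sqP[sxu sx _ nxu h] su.
apply: simple_sqI; rewrite ?submodD ?addsmxSr //.
  apply: contra nxu; rewrite addsmx_sub => /andP[xu _]; by rewrite sub_capmx submx_refl.
move=> W sW uw wxu.
case: (h (W :&: X)%MS (submodI sW sx) _ (capmxSr _ _)).
- by rewrite sub_capmx capmxSl andbT (submx_trans (capmxSr _ _)).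
- move=> H; left.
  have: (W <= (U + X) :&: W)%MS by rewrite sub_capmx addsmxC wxu submx_refl.
  rewrite -(matrix_modl _ uw); move/submx_trans; apply.
  rewrite addsmx_sub submx_refl /= capmxC.
  exact: submx_trans H (capmxSr _ _).
- by rewrite sub_capmx => /andP[xw _]; right; rewrite addsmx_sub xw uw.
Qed.

Lemma subrmx_sub (X Y Z : 'M[F]_n) : (X <= Z)%MS -> (Y <= Z)%MS -> (X - Y <= Z)%MS.
Proof. by move=> xz yz; apply: addmx_sub => //; rewrite eqmx_opp. Qed.

Lemma sub_of_iso_ker f U1 V1 U2 X : (V1 :&: kermx (f *m cokermx U2) <= U1)%MS ->
  (X <= V1)%MS -> (X *m f <= U2)%MS -> (X <= U1)%MS.
Proof.
move=> h xv xf; apply: submx_trans h; rewrite sub_capmx xv sub_kermx mulmxA.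
by rewrite -submxE.
Qed.

Lemma iso_ker_sub f U1 V1 U2 :
  (forall X, (X <= V1)%MS -> (X *m f <= U2)%MS -> (X <= U1)%MS) ->
  (V1 :&: kermx (f *m cokermx U2) <= U1)%MS.
Proof.
move=> h; apply: h; first exact: capmxSl.
rewrite submxE -mulmxA -sub_kermx; exact: capmxSr.
Qed.

Lemma iso_sq_id U1 V1 U2 V2 : (V1 <= V2)%MS -> (U1 <= U2)%MS ->
  (V2 <= V1 + U2)%MS -> (V1 :&: U2 <= U1)%MS -> iso_sq As U1 V1 U2 V2.
Proof.
move=> h1 h2 h3 h4; exists 1%:M; split; rewrite ?mulmx1 //.
- apply: iso_ker_sub => X xv; rewrite mulmx1 => xu.
  by apply: submx_trans h4; rewrite sub_capmx xv xu.
- by move=> A _; rewrite mulmx1 mul1mx subrr mulmx0 sub0mx.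
Qed.

Lemma iso_sq_refl U V : iso_sq As U V U V.
Proof.
apply: iso_sq_id; rewrite ?submx_refl ?addsmxSl ?capmxSr //.
Qed.

Lemma iso_sq_trans U1 V1 U2 V2 U3 V3 :
  iso_sq As U1 V1 U2 V2 -> iso_sq As U2 V2 U3 V3 -> iso_sq As U1 V1 U3 V3.
Proof.
move=> [f1 [a1 b1 c1 d1 e1]] [f2 [a2 b2 c2 d2 e2]].
exists (f1 *m f2); split.
- by rewrite mulmxA (submx_trans (submxMr _ a1)).
- by rewrite mulmxA (submx_trans (submxMr _ b1)).
- apply: submx_trans c2 _; rewrite addsmx_sub addsmxSr andbT.
  apply: submx_trans (submxMr f2 c1) _; rewrite addsmxMr addsmx_sub.
  by rewrite mulmxA addsmxSl /= (submx_trans b2) ?addsmxSr.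
- apply: iso_ker_sub => X xv; rewrite mulmxA => xf.
  have h2 : (X *m f1 <= U2)%MS by apply: (sub_of_iso_ker d2 _ xf); exact: submx_trans (submxMr _ xv) a1.
  exact: (sub_of_iso_ker d1 xv h2).
- move=> A hA.
  have -> : A *m (f1 *m f2) - f1 *m f2 *m A =
            (A *m f1 - f1 *m A) *m f2 + f1 *m (A *m f2 - f2 *m A).
    by rewrite mulmxBl mulmxBr !mulmxA addrA subrK.
  rewrite mulmxDr; apply: addmx_sub.
    by rewrite mulmxA (submx_trans (submxMr _ (e1 _ hA))).
  by rewrite mulmxA (submx_trans (submxMr _ a1)) ?e2.
Qed.

Definition iso_inv f V1 U2 : 'M[F]_n := pinvmx (col_mx (V1 *m f) U2) *m col_mx V1 0.

Lemma iso_invP f V1 U2 X : (X <= V1 *m f + U2)%MS ->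
  (X *m iso_inv f V1 U2 <= V1)%MS /\ (X - X *m iso_inv f V1 U2 *m f <= U2)%MS.
Proof.
rewrite addsmxE => xC; have hX := mulmxKpV xC.
set D := X *m pinvmx _ in hX.
have -> : X *m iso_inv f V1 U2 = lsubmx D *m V1.
  by rewrite /iso_inv mulmxA -/D -[D]hsubmxK mul_row_col mulmx0 addr0 row_mxKl.
split; first exact: submxMl.
rewrite -{1}hX -{1}[D]hsubmxK mul_row_col -mulmxA addrAC subrr add0r.
exact: submxMl.
Qed.

Lemma iso_inv_comm f U1 V1 U2 V2 A : subm V1 -> subm U2 -> subm V2 -> A \in As ->
  (V2 <= V1 *m f + U2)%MS -> (V1 :&: kermx (f *m cokermx U2) <= U1)%MS ->
  (V1 *m (A *m f - f *m A) <= U2)%MS ->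
  (V2 *m (A *m iso_inv f V1 U2 - iso_inv f V1 U2 *m A) <= U1)%MS.
Proof.
move=> sV1 sU2 sV2 hA c d e.
set g := iso_inv f V1 U2; have K X := @iso_invP f V1 U2 X.
have xA : (V2 *m A <= V1 *m f + U2)%MS := submx_trans (submodM sV2 hA) c.
case: (K _ xA) => h1 h2; case: (K _ c) => h3 h4.
apply: sub_of_iso_ker d _ _.
  rewrite mulmxBr mulmxA; apply: subrmx_sub => //.
  by rewrite mulmxA (submx_trans (submxMr _ h3)) ?(submodM sV1 hA).
have -> : V2 *m (A *m g - g *m A) *m f =
   (V2 - V2 *m g *m f) *m A - (V2 *m A - V2 *m A *m g *m f)
     - V2 *m g *m (A *m f - f *m A).
  rewrite !mulmxBl !mulmxBr !mulmxBl !mulmxA.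
  set a1 := V2 *m A *m g *m f; set b1 := V2 *m g *m A *m f.
  set c1 := V2 *m A; set d1 := V2 *m g *m f *m A.
  exact: subr_regroup.
apply: subrmx_sub; first apply: subrmx_sub => //.
  exact: submx_trans (submxMr _ h4) (submodM sU2 hA).
exact: submx_trans (submxMr _ h3) e.
Qed.

Lemma iso_sq_sym U1 V1 U2 V2 : subm V1 -> subm U2 -> subm V2 ->
  iso_sq As U1 V1 U2 V2 -> iso_sq As U2 V2 U1 V1.
Proof.
move=> sV1 sU2 sV2 [f [a b c d e]].
set g := iso_inv f V1 U2; have K X := @iso_invP f V1 U2 X.
have XU2 : (U2 <= V1 *m f + U2)%MS by exact: addsmxSr.
exists g; split.
- by case: (K _ c).
- case: (K _ XU2) => h1 h2; apply: sub_of_iso_ker d h1 _.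
  have -> : U2 *m g *m f = U2 - (U2 - U2 *m g *m f) by rewrite opprB addrC subrK.
  exact: subrmx_sub.
- have hc : (V1 *m f <= V1 *m f + U2)%MS by exact: addsmxSl.
  case: (K _ hc) => h1 h2.
  have hY : (V1 - V1 *m f *m g <= U1)%MS.
    apply: sub_of_iso_ker d _ _; first by apply: subrmx_sub => //; rewrite submx_refl.
    by rewrite mulmxBl.
  rewrite -[X in (X <= _)%MS](subrK (V1 *m f *m g)) addsmxC.
  apply: addmx_sub_adds => //.
  exact: submxMr _ a.
- apply: iso_ker_sub => X xv xg.
  have xc : (X <= V1 *m f + U2)%MS := submx_trans xv c.
  case: (K _ xc) => h1 h2.
  rewrite -[X](subrK (X *m g *m f)); apply: addmx_sub => //.
  exact: submx_trans (submxMr _ xg) b.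
- by move=> A hA; exact: iso_inv_comm sV1 sU2 sV2 hA c d (e A hA).
Qed.

Lemma iso_sq_simple U1 V1 U2 V2 : subm U2 -> subm V2 -> (U2 <= V2)%MS ->
  iso_sq As U1 V1 U2 V2 -> simple_sq As U1 V1 -> simple_sq As U2 V2.
Proof.
move=> sU2 sV2 uv2 [f [a b c d e]] /simple_sqP[sU1 sV1 uv1 nvu1 h].
apply: simple_sqI => //.
  apply: contra nvu1 => vu2; apply: sub_of_iso_ker d (submx_refl _) _.
  exact: submx_trans a vu2.
move=> Z sZ uz zv.
pose Z' := (V1 :&: kermx (f *m cokermx Z))%MS.
have Z'P X : (X <= Z')%MS = (X <= V1)%MS && (X *m f <= Z)%MS.
  by rewrite sub_capmx sub_kermx mulmxA -submxE.
have sZ' : subm Z'.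
  apply/submodP => A hA; rewrite Z'P.
  have z1 : (Z' <= V1)%MS by exact: capmxSl.
  have z2 : (Z' *m f <= Z)%MS by move: (submx_refl Z'); rewrite Z'P => /andP[].
  rewrite (submx_trans (submxMr _ z1)) ?(submodM sV1 hA) //=.
  have -> : Z' *m A *m f = Z' *m (A *m f - f *m A) + Z' *m f *m A.
    by rewrite mulmxBr !mulmxA subrK.
  apply: addmx_sub; last exact: submx_trans (submxMr _ z2) (submodM sZ hA).
  apply: submx_trans uz; apply: submx_trans (submxMr _ z1) _.
  exact: e.
have uz' : (U1 <= Z')%MS by rewrite Z'P uv1 (submx_trans b uz).
case: (h Z' sZ' uz' (capmxSl _ _)) => H.
  left; move/sub_addsmxP: (submx_trans zv c) => [[D1 D2] /= EZ].
  have hD2 : (D2 *m U2 <= U2)%MS by exact: submxMl.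
  have hD : (D1 *m V1 <= Z')%MS.
    rewrite Z'P submxMl /=.
    have -> : D1 *m V1 *m f = Z - D2 *m U2 by rewrite EZ mulmxA addrK.
    by apply: subrmx_sub; rewrite ?submx_refl // (submx_trans hD2).
  have hU : (D1 *m V1 *m f <= U2)%MS.
    exact: submx_trans (submxMr _ (submx_trans hD H)) b.
  by rewrite EZ; apply: addmx_sub; rewrite // mulmxA.
right; apply: submx_trans c _; rewrite addsmx_sub uz.
by move: H; rewrite Z'P submx_refl /= => ->.
Qed.

Lemma ex_maxmx (P : 'M[F]_n -> Prop) W0 : P W0 ->
  exists W, P W /\ (forall S, P S -> (W <= S)%MS -> (S <= W)%MS).
Proof.
move: W0; suff H m : forall W0, (n - \rank W0 < m)%N -> P W0 ->
  exists W, P W /\ (forall S, P S -> (W <= S)%MS -> (S <= W)%MS).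
  by move=> W0; apply: (H (n - \rank W0).+1).
elim: m => [//|m IH] W0 hm P0.
case: (Classical_Prop.classic (exists S, P S /\ (W0 <= S)%MS /\ ~~ (S <= W0)%MS)).
  move=> [S [PS [ws nsw]]]; apply: (IH S) => //.
  have : (\rank W0 < \rank S)%N by rewrite ltn_rank_submx.
  have := rank_leq_col S; move: hm; rewrite ltnS; lia.
move=> Hn; exists W0; split => // S PS ws; apply/negP => nsw; apply: Hn.
by exists S; rewrite ws; split => //; split => //; apply/negP.
Qed.

Lemma ex_minmx (P : 'M[F]_n -> Prop) W0 : P W0 ->
  exists W, P W /\ (forall S, P S -> (S <= W)%MS -> (W <= S)%MS).
Proof.
move: W0; suff H m : forall W0, (\rank W0 < m)%N -> P W0 ->
  exists W, P W /\ (forall S, P S -> (S <= W)%MS -> (W <= S)%MS).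
  by move=> W0; apply: (H (\rank W0).+1).
elim: m => [//|m IH] W0 hm P0.
case: (Classical_Prop.classic (exists S, P S /\ (S <= W0)%MS /\ ~~ (W0 <= S)%MS)).
  move=> [S [PS [ws nsw]]]; apply: (IH S) => //.
  have : (\rank S < \rank W0)%N by rewrite ltn_rank_submx.
  move: hm; rewrite ltnS; lia.
move=> Hn; exists W0; split => // S PS ws; apply/negP => nsw; apply: Hn.
by exists S; rewrite ws; split => //; split => //; apply/negP.
Qed.

Lemma ex_simple_quotient A B : subm A -> subm B -> (A <= B)%MS -> ~~ (B <= A)%MS ->
  exists W, [/\ subm W, (A <= W)%MS & simple_sq As W B].
Proof.
move=> sA sB ab nba.
have [W [[sW [aw [wb nbw]]] Hm]] := ex_maxmx
  (P := fun S => subm S /\ (A <= S)%MS /\ (S <= B)%MS /\ ~~ (B <= S)%MS)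
  (conj sA (conj (submx_refl A) (conj ab nba))).
exists W; split => //; apply: simple_sqI => // S sS ws sb.
case bs: (B <= S)%MS; first by right.
left; apply: Hm => //; split => //; split; first exact: submx_trans ws.
by rewrite sb bs.
Qed.

Lemma ex_simple_sub A B : subm A -> subm B -> (A <= B)%MS -> ~~ (B <= A)%MS ->
  exists Y, [/\ subm Y, (Y <= B)%MS & simple_sq As A Y].
Proof.
move=> sA sB ab nba.
have [Y [[sY [ay [yb nya]]] Hm]] := ex_minmx
  (P := fun S => subm S /\ (A <= S)%MS /\ (S <= B)%MS /\ ~~ (S <= A)%MS)
  (conj sB (conj ab (conj (submx_refl B) nba))).
exists Y; split => //; apply: simple_sqI => // S sS ws sb.
case bs: (S <= A)%MS; first by left.
right; apply: Hm => //; split => //; split => //; split; first exact: submx_trans yb.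
by rewrite bs.
Qed.

Definition nonsplit X W Y := ~ (exists W', [/\ subm W', (X <= W' <= Y)%MS,
   (W' :&: W <= X)%MS & (Y <= W' + W)%MS]).

Lemma nonsplit_top X W Y : simple_sq As X W -> simple_sq As W Y ->
  (forall W', subm W' -> (X <= W')%MS -> (W' <= Y)%MS -> ~~ (Y <= W')%MS -> (W' <= W)%MS) ->
  nonsplit X W Y.
Proof.
move=> /simple_sqP[_ _ xw nwx _] /simple_sqP[_ _ wy nyw _] topW.
move=> [W' [sW' /andP[xw' w'y] w'w yw']].
case: (boolP (Y <= W')%MS) => [yW'|nyW'].
  by case/negP: nwx; apply: submx_trans w'w; rewrite sub_capmx submx_refl (submx_trans wy yW').
by case/negP: nyw; apply: submx_trans yw' _; rewrite addsmx_sub submx_refl topW.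
Qed.

Lemma nonsplit_bottom X W Y : simple_sq As X W -> simple_sq As W Y ->
  (forall W', subm W' -> (X <= W')%MS -> (W' <= Y)%MS -> ~~ (W' <= X)%MS -> (W <= W')%MS) ->
  nonsplit X W Y.
Proof.
move=> /simple_sqP[_ _ xw nwx _] /simple_sqP[_ _ wy nyw _] botW.
move=> [W' [sW' /andP[xw' w'y] w'w yw']].
case: (boolP (W' <= X)%MS) => [w'x|nw'x].
  by case/negP: nyw; apply: submx_trans yw' _; rewrite addsmx_sub submx_refl (submx_trans w'x).
by case/negP: nwx; apply: submx_trans w'w; rewrite sub_capmx submx_refl botW.
Qed.

End Submodules.

Section CompositionSeries.
Variables (F : fieldType) (n : nat) (As : seq 'M[F]_n).
Local Notation subm := (submod As).
Local Notation nonsplit := (nonsplit As).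
Implicit Types U V W X Y Z A B C K : 'M[F]_n.
Variables (len : nat) (c : nat -> 'M[F]_n).
Hypothesis c0 : (c 0%N == (0 : 'M[F]_n))%MS.
Hypothesis clen : (c len == 1%:M)%MS.
Hypothesis cs : forall i, (i < len)%N -> simple_sq As (c i) (c i.+1).
Hypothesis cmf : forall i j, (i < len)%N -> (j < len)%N ->
  iso_sq As (c i) (c i.+1) (c j) (c j.+1) -> i = j.

(* [occurs A B i]: the factor c_(i+1)/c_i is a constituent of B/A. *)
Definition covers i X := (c i.+1 <= X + c i)%MS.
Definition occurs A B i := [&& (i < len)%N, covers i B & ~~ covers i A].

Lemma coversS i A B : (A <= B)%MS -> covers i A -> covers i B.
Proof. by rewrite /covers => ab h; apply: submx_trans h _; apply: addsmxS. Qed.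

Lemma eqmx_occurs A B A' B' i : (A == A')%MS -> (B == B')%MS ->
  occurs A B i -> occurs A' B' i.
Proof.
move=> /andP[_ a'a] /andP[bb' _] /and3P[il cB nA].
by rewrite /occurs il (coversS bb' cB); apply: contra nA; apply: coversS.
Qed.

Lemma occursSl A A' B i : (A <= A')%MS -> occurs A' B i -> occurs A B i.
Proof.
move=> aa /and3P[h1 h2 h3]; rewrite /occurs h1 h2 /=.
by apply: contra h3; apply: coversS.
Qed.

Lemma occursSr A B B' i : (B <= B')%MS -> occurs A B i -> occurs A B' i.
Proof.
by move=> bb /and3P[h1 h2 h3]; rewrite /occurs h1 h3 (coversS bb h2).
Qed.

Lemma occurs_split A B C i : (A <= B)%MS -> (B <= C)%MS ->
  occurs A C i -> occurs A B i \/ occurs B C i.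
Proof.
move=> ab bc /and3P[h1 h2 h3]; rewrite /occurs h1 h2 h3 /=.
by case e: (covers i B); [left|right].
Qed.

Lemma occurs_disj A B C i : occurs A B i -> occurs B C i -> False.
Proof. by move=> /and3P[_ h _] /and3P[_ _ h2]; rewrite h in h2. Qed.

Lemma covers0 i : (i < len)%N -> ~~ covers i 0.
Proof.
move=> il; have /simple_sqP[_ _ _ nc _] := cs il.
by apply: contra nc; rewrite /covers adds0mx_id.
Qed.

Lemma covers1 i X : (1%:M <= X)%MS -> covers i X.
Proof. by move=> h; rewrite /covers (submx_trans (submx1 _)) // (submx_trans h) ?addsmxSl. Qed.

Lemma cap_or_covers i X : (i < len)%N -> subm X ->
  (c i.+1 :&: X <= c i)%MS \/ covers i X.
Proof.
move=> il sX; have /simple_sqP[sci sci1 cc _ H] := cs il.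
case: (H (c i.+1 :&: X + c i)%MS); rewrite ?submodD ?submodI ?addsmxSr //.
- by rewrite addsmx_sub capmxSl cc.
- by rewrite addsmx_sub => /andP[h _]; left.
- move=> h; right; apply: submx_trans h _; apply: addsmxS => //; exact: capmxSr.
Qed.

Lemma no_occurs_sub A B : subm B -> (A <= B)%MS -> (forall i, ~~ occurs A B i) -> (B <= A)%MS.
Proof.
move=> sB ab H.
suff Ht t : (t <= len)%N -> (c t :&: B <= A)%MS.
  apply: submx_trans (Ht _ (leqnn _)).
  by rewrite sub_capmx submx_refl andbT (submx_trans (submx1 _)) //; case/andP: clen.
elim: t => [_|t IH tl].
  by apply: submx_trans (capmxSl _ _) _; case/andP: c0 => h _; rewrite (submx_trans h) ?sub0mx.
have il : (t < len)%N by [].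
case: (cap_or_covers il sB) => h.
  apply: submx_trans (IH (ltnW tl)); by rewrite sub_capmx h capmxSr.
have eA : covers t A by move: (H t); rewrite /occurs il h /= negbK.
have : (c t.+1 :&: B <= (A + c t) :&: B)%MS by apply: capmxS.
rewrite -(matrix_modl _ ab); move/submx_trans; apply.
by rewrite addsmx_sub submx_refl IH // ltnW.
Qed.

Lemma ex_occurs A B : subm B -> (A <= B)%MS -> ~~ (B <= A)%MS -> exists i, occurs A B i.
Proof.
move=> sB ab nba; apply: Classical_Prop.NNPP => Hn; case/negP: nba.
apply: no_occurs_sub => // i; apply/negP => hi; apply: Hn; by exists i.
Qed.

Lemma submod_c i : (i <= len)%N -> subm (c i).
Proof.
case: (ltngtP i len) => // [il _|-> _]; first by case/simple_sqP: (cs il).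
by apply: eqmx_submod (submod1 As); rewrite submx1 andbT; case/andP: clen.
Qed.

Lemma occurs_factor_iso U V i : simple_sq As U V -> occurs U V i ->
  iso_sq As (c i) (c i.+1) U V.
Proof.
move=> sUV /and3P[il eV nU]; have /simple_sqP[sU sV uv nvu H] := sUV.
have /simple_sqP[sci sci1 cc _ _] := cs il.
(* Both V/U and c_(i+1)/c_i are isomorphic to P/Q. *)
set P := (c i.+1 :&: V)%MS; set Q := (c i.+1 :&: U)%MS.
have sP : subm P by exact: submodI.
have sQ : subm Q by exact: submodI.
have f1 : (Q <= c i)%MS by case: (cap_or_covers il sU) => // h; rewrite h in nU.
have f2 : (c i.+1 <= P + c i)%MS.
  have : (c i.+1 <= (c i + V) :&: c i.+1)%MS by rewrite sub_capmx submx_refl andbT addsmxC; exact: eV.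
  rewrite -(matrix_modl _ cc) addsmxC; move/submx_trans; apply.
  by apply: addsmxS; rewrite // capmxC.
have f3 : (c i :&: V <= U)%MS.
  case: (H (U + c i :&: V)%MS); rewrite ?submodD ?submodI ?addsmxSl //.
  - by rewrite addsmx_sub uv capmxSr.
  - by rewrite addsmx_sub => /andP[].
  move=> vw; case/negP: nU; apply: submx_trans f2 _; rewrite addsmx_sub addsmxSr andbT.
  apply: submx_trans (capmxSr _ _) _; apply: submx_trans vw _.
  by rewrite addsmx_sub addsmxSl /= (submx_trans (capmxSl _ _)) ?addsmxSr.
have f4 : (V <= P + U)%MS.
  case: (H (P + U)%MS); rewrite ?submodD ?addsmxSr //.
  - by rewrite addsmx_sub uv capmxSr.
  - rewrite addsmx_sub => /andP[pu _]; case/negP: nU; apply: submx_trans f2 _.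
    by apply: addsmxS.
have i1 : iso_sq As Q P U V.
  apply: iso_sq_id; rewrite ?capmxSr //; rewrite /P /Q.
  by apply: capmxS; rewrite ?capmxSl.
have i2 : iso_sq As Q P (c i) (c i.+1).
  apply: iso_sq_id; rewrite ?capmxSl //; rewrite /P /Q sub_capmx.
  rewrite (submx_trans (capmxSl _ _)) ?capmxSl //=.
  apply: submx_trans f3; rewrite sub_capmx capmxSr /=.
  exact: submx_trans (capmxSl _ _) (capmxSr _ _).
apply: iso_sq_trans i1; exact: iso_sq_sym i2.
Qed.

Lemma iso_factor_inj U V i j : subm U -> subm V -> (i < len)%N -> (j < len)%N ->
  iso_sq As (c i) (c i.+1) U V -> iso_sq As (c j) (c j.+1) U V -> i = j.
Proof.
move=> sU sV il jl hi hj; apply: cmf => //; apply: iso_sq_trans hi _.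
by apply: iso_sq_sym; rewrite // submod_c.
Qed.

Lemma occurs_uniq U V i j : simple_sq As U V -> occurs U V i -> occurs U V j -> i = j.
Proof.
move=> sUV hi hj; have /simple_sqP[sU sV _ _ _] := sUV.
have il : (i < len)%N by case/and3P: hi.
have jl : (j < len)%N by case/and3P: hj.
exact: (iso_factor_inj sU sV il jl (occurs_factor_iso sUV hi) (occurs_factor_iso sUV hj)).
Qed.

Lemma factor_iso_occurs U V i : simple_sq As U V -> (i < len)%N ->
  iso_sq As (c i) (c i.+1) U V -> occurs U V i.
Proof.
move=> sUV il hi; have /simple_sqP[sU sV uv nvu _] := sUV.
have [j hj] := ex_occurs sV uv nvu.
have jl : (j < len)%N by case/and3P: hj.
by rewrite (iso_factor_inj sU sV il jl hi (occurs_factor_iso sUV hj)).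
Qed.

Lemma iso_sq_occurs U V Q P i : simple_sq As U V -> occurs U V i -> subm Q -> subm P ->
  (Q <= P)%MS -> iso_sq As U V Q P -> simple_sq As Q P /\ occurs Q P i.
Proof.
move=> sUV hi sQ sP qp hiso.
have sQP := iso_sq_simple sQ sP qp hiso sUV.
split => //; apply: factor_iso_occurs => //; first by case/and3P: hi.
exact: iso_sq_trans (occurs_factor_iso sUV hi) hiso.
Qed.

Lemma occurs_iso_sq U1 V1 U2 V2 i : simple_sq As U1 V1 -> simple_sq As U2 V2 ->
  occurs U1 V1 i -> occurs U2 V2 i -> iso_sq As U1 V1 U2 V2.
Proof.
move=> s1 s2 h1 h2; have /simple_sqP[sU1 sV1 _ _ _] := s1.
have /simple_sqP[sU2 sV2 _ _ _] := s2.
apply: iso_sq_trans (occurs_factor_iso s2 h2).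
have il : (i < len)%N by case/and3P: h1.
exact: iso_sq_sym (submod_c il) sU1 sV1 (occurs_factor_iso s1 h1).
Qed.

Lemma occurs_nsub A B i : occurs A B i -> ~~ (B <= A)%MS.
Proof.
move=> /and3P[_ eB nA]; apply/negP => ba; case/negP: nA; exact: coversS eB.
Qed.

Lemma occurs_simple_sub A B i : subm A -> subm B -> (A <= B)%MS -> occurs A B i ->
  exists U V, [/\ simple_sq As U V, (A <= U)%MS, (V <= B)%MS & occurs U V i].
Proof.
move=> sA; move: B; suff H m : forall B, (\rank B < m)%N -> subm B -> (A <= B)%MS ->
  occurs A B i -> exists U V, [/\ simple_sq As U V, (A <= U)%MS, (V <= B)%MS & occurs U V i].
  by move=> B; apply: (H (\rank B).+1).
elim: m => [//|m IH] B hm sB ab hi.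
have [W [sW aw sWB]] := ex_simple_quotient sA sB ab (occurs_nsub hi).
have /simple_sqP[_ _ wb nbw _] := sWB.
case: (occurs_split aw wb hi) => h.
  have hr : (\rank W < m)%N.
    by move: hm; rewrite ltnS; apply: leq_trans; rewrite ltn_rank_submx.
  have [U [V [s1 s2 s3 s4]]] := IH W hr sW aw h.
  by exists U, V; split => //; exact: submx_trans s3 wb.
by exists W, B; split.
Qed.

Lemma constituent_occurs A B U V i : simple_sq As U V -> occurs U V i ->
  constituent As A B U V -> occurs A B i.
Proof.
move=> sUV hi [U' [V' [s' [au [vb hiso]]]]].
have /simple_sqP[sU sV _ _ _] := sUV.
have /simple_sqP[sU' sV' _ _ _] := s'.
have il : (i < len)%N by case/and3P: hi.
apply: (occursSl au); apply: (occursSr vb); apply: factor_iso_occurs => //.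
exact: iso_sq_trans (occurs_factor_iso sUV hi) (iso_sq_sym sV' sU sV hiso).
Qed.

Lemma occurs_constituent A B U V i : subm A -> subm B -> (A <= B)%MS -> occurs A B i ->
  simple_sq As U V -> occurs U V i -> constituent As A B U V.
Proof.
move=> sA sB ab hAB sUV hUV.
have [U' [V' [s1 s2 s3 s4]]] := occurs_simple_sub sA sB ab hAB.
exists U', V'; split => //; split => //; split => //.
exact: occurs_iso_sq s4 hUV.
Qed.

Lemma occurs_addsmx A B X i : subm A -> subm B -> subm X -> (A <= B)%MS ->
  occurs (A + X)%MS (B + X)%MS i -> occurs A B i.
Proof.
move=> sA sB sX ab hi.
have [U' [V' [s1 s2 s3 s4]]] := occurs_simple_sub (submodD sA sX) (submodD sB sX) (addsmxS ab (submx_refl X)) hi.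
have /simple_sqP[sU' sV' uv _ _] := s1.
set P := (V' :&: B)%MS; set Q := (P :&: U')%MS.
have sP : subm P by exact: submodI.
have sQ : subm Q by exact: submodI.
have xu : (X <= U')%MS by exact: submx_trans (addsmxSr _ _) s2.
have au : (A <= U')%MS by exact: submx_trans (addsmxSl _ _) s2.
have vpu : (V' <= P + U')%MS.
  rewrite /P (matrix_modr B uv) sub_capmx submx_refl /=.
  apply: submx_trans s3 _; exact: addsmxS (submx_refl B) xu.
have hid : iso_sq As Q P U' V'.
  by apply: iso_sq_id; rewrite ?capmxSl ?capmxSr ?submx_refl.
have [_ hQP] := iso_sq_occurs s1 s4 sQ sP (capmxSl _ _) (iso_sq_sym sP sU' sV' hid).
apply: (occursSl _ (occursSr _ hQP)); last exact: capmxSr.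
rewrite /Q /P !sub_capmx au ab (submx_trans au uv) //.
Qed.

Lemma occurs_capmx A B Y i : subm A -> subm B -> subm Y -> (A <= B)%MS ->
  occurs (A :&: Y)%MS (B :&: Y)%MS i -> occurs A B i.
Proof.
move=> sA sB sY ab hi.
have [U' [V' [s1 s2 s3 s4]]] := occurs_simple_sub (submodI sA sY) (submodI sB sY) (capmxS ab (submx_refl Y)) hi.
have /simple_sqP[sU' sV' uv _ _] := s1.
have hid : iso_sq As U' V' (U' + A)%MS (V' + A)%MS.
  apply: iso_sq_id.
  - exact: addsmxSl.
  - exact: addsmxSl.
  - by rewrite addsmx_sub addsmxSl /= (submx_trans (addsmxSr U' A)) // addsmxSr.
  rewrite capmxC -(matrix_modl _ uv) addsmx_sub submx_refl /=.
  apply: submx_trans s2; rewrite sub_capmx capmxSl /=.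
  exact: submx_trans (capmxSr _ _) (submx_trans s3 (capmxSr _ _)).
have [_ h2] := iso_sq_occurs s1 s4 (submodD sU' sA) (submodD sV' sA) (addsmxS uv (submx_refl A)) hid.
apply: (occursSl (addsmxSr _ _) (occursSr _ h2)).
by rewrite addsmx_sub ab (submx_trans s3 (capmxSl _ _)).
Qed.

Lemma occurs_bigcap N (Ws : seq 'M[F]_n) i : subm N ->
  (forall W, W \in Ws -> subm W /\ (W <= N)%MS) ->
  occurs ((\bigcap_(W <- Ws) W) :&: N)%MS N i -> exists2 W, W \in Ws & occurs W N i.
Proof.
move=> sN; elim: Ws => [|W Ws IH] HW; rewrite ?big_nil ?big_cons.
  move=> /and3P[_ e ne]; case/negP: ne; apply: coversS e; by submx_lattice.
set I := (\bigcap_(W0 <- Ws) W0)%MS => h.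
have [sW wn] := HW W (mem_head _ _).
have HWs : forall W0, W0 \in Ws -> subm W0 /\ (W0 <= N)%MS.
  by move=> W0 h0; apply: HW; rewrite in_cons h0 orbT.
have sI : subm I by apply: submod_bigcap => W0 h0; case: (HWs W0 h0).
have e1 : (W :&: I :&: N == W :&: (I :&: N))%MS by submx_lattice.
have := eqmx_occurs e1 (eqmxb_refl N) h => {}h.
case: (occurs_split (capmxSl _ _) wn h) => h2; last by exists W; rewrite ?mem_head.
have e2 : (W :&: (I :&: N) == (I :&: N) :&: W)%MS by submx_lattice.
have e3 : (W == N :&: W)%MS by apply/andP; split; submx_lattice.
have := occurs_capmx (submodI sI sN) sN sW (capmxSr _ _) (eqmx_occurs e2 e3 h2) => h3.
have [W0 h0 h4] := IH HWs h3; exists W0 => //; by rewrite in_cons h0 orbT.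
Qed.

Lemma occurs_bigsum B (Ws : seq 'M[F]_n) i : subm B ->
  (forall W, W \in Ws -> subm W /\ (B <= W)%MS) ->
  occurs B (B + \sum_(W <- Ws) W)%MS i -> exists2 W, W \in Ws & occurs B W i.
Proof.
move=> sB; elim: Ws => [|W Ws IH] HW; rewrite ?big_nil ?big_cons.
  move=> /and3P[_ e ne]; case/negP: ne; apply: coversS e; by submx_lattice.
set S := (\sum_(W0 <- Ws) W0)%MS => h.
have [sW bw] := HW W (mem_head _ _).
have HWs : forall W0, W0 \in Ws -> subm W0 /\ (B <= W0)%MS.
  by move=> W0 h0; apply: HW; rewrite in_cons h0 orbT.
have sS : subm S by apply: submod_bigsum => W0 h0; case: (HWs W0 h0).
have e1 : (B + (W + S) == (B + S) + W)%MS by submx_lattice.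
have := eqmx_occurs (eqmxb_refl B) e1 h => {}h.
case: (occurs_split (addsmxSl B S) (addsmxSl _ W) h) => h2.
  have [W0 h0 h4] := IH HWs h2; exists W0 => //; by rewrite in_cons h0 orbT.
have e2 : (B + S == ((B + S) :&: W) + (B + S))%MS by apply/andP; split; submx_lattice.
have e3 : ((B + S) + W == W + (B + S))%MS by submx_lattice.
have := occurs_addsmx (submodI (submodD sB sS) sW) sW (submodD sB sS) (capmxSr _ _) (eqmx_occurs e2 e3 h2).
move/(occursSl (A := B)) => h3; exists W; rewrite ?mem_head //; apply: h3; by submx_lattice.
Qed.

Lemma occurs_restr A B X Y j : subm A -> subm B -> subm X -> subm Y -> (A <= B)%MS ->
  occurs (A :&: Y + X)%MS (B :&: Y + X)%MS j -> occurs A B j.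
Proof.
move=> sA sB sX sY ab.
move/(occurs_addsmx (submodI sA sY) (submodI sB sY) sX (capmxS ab (submx_refl _))).
exact: occurs_capmx.
Qed.

Lemma simple_occurs U V : simple_sq As U V -> exists i, occurs U V i.
Proof. by case/simple_sqP => _ sV uv nvu _; exact: ex_occurs. Qed.

Lemma occurs_lt A B i : occurs A B i -> (i < len)%N.
Proof. by case/and3P. Qed.

Lemma iso_sq_occursV U1 V1 U2 V2 i : simple_sq As U1 V1 -> simple_sq As U2 V2 ->
  iso_sq As U1 V1 U2 V2 -> occurs U2 V2 i -> occurs U1 V1 i.
Proof.
move=> s1 s2 hiso h2; have /simple_sqP[sU1 sV1 uv1 _ _] := s1.
have /simple_sqP[sU2 sV2 _ _ _] := s2.
by case: (iso_sq_occurs s2 h2 sU1 sV1 uv1 (iso_sq_sym sV1 sU2 sV2 hiso)).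
Qed.

(* The extension 0 -> W/X -> Y/X -> Y/W -> 0 realises factor i1 pointing to
   factor i2. *)
Definition pointing X W Y i1 i2 :=
  [/\ [/\ subm X, subm W, subm Y, (X <= W)%MS & (W <= Y)%MS],
      [/\ simple_sq As X W, occurs X W i2, simple_sq As W Y & occurs W Y i1] &
      nonsplit X W Y].

Lemma pointing_neq X W Y i1 i2 : pointing X W Y i1 i2 -> i1 != i2.
Proof.
case=> _ [_ h2 _ h1] _; apply/eqP => e; subst i2; exact: occurs_disj h2 h1.
Qed.

(* Otherwise K :&: Y + X would be a complement of W/X in Y/X. *)
Lemma pointing_covers X W Y i1 i2 K :
  pointing X W Y i1 i2 -> subm K -> covers i1 K -> covers i2 K.
Proof.
move=> [[sX sW sY xw wy] [sXW h2 sWY h1] NS] sK e1; apply/idPn => ne2.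
set W' := (K :&: Y + X)%MS.
have sW' : subm W' by rewrite submodD ?submodI.
apply: NS; exists W'; split => //.
- by rewrite addsmxSr addsmx_sub capmxSr (submx_trans xw wy).
- apply: no_occurs_sub; rewrite ?submodI //; first by rewrite sub_capmx addsmxSr xw.
  move=> j; apply/negP => hj.
  have := occurs_uniq sXW (occursSr (capmxSr _ _) hj) h2 => ej; subst j.
  have := occursSr (capmxSl _ _) hj.
  have eX : (X == (0 : 'M[F]_n) + X)%MS by rewrite addsmxSr addsmx_sub sub0mx submx_refl.
  move/(eqmx_occurs eX (eqmxb_refl W')).
  move/(occurs_addsmx (submod0 As) (submodI sK sY) sX (sub0mx _ _)) => /and3P[_ e _].
  by case/negP: ne2; apply: coversS e; exact: capmxSl.
- apply: no_occurs_sub => //; first by rewrite addsmx_sub wy addsmx_sub capmxSr (submx_trans xw wy).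
  move=> j; apply/negP => hj.
  have := occurs_uniq sWY (occursSl (addsmxSr _ _) hj) h1 => ej; subst j.
  have := occursSl (addsmxSl _ _) hj.
  have eY : (Y == Y + X)%MS by rewrite addsmxSl addsmx_sub submx_refl (submx_trans xw wy).
  move/(eqmx_occurs (eqmxb_refl W') eY).
  move/(occurs_addsmx (submodI sK sY) sY sX (capmxSr _ _)).
  have eY1 : (Y == 1%:M :&: Y)%MS by rewrite sub_capmx submx1 submx_refl capmxSr.
  move/(eqmx_occurs (eqmxb_refl _) eY1).
  move/(occurs_capmx sK (submod1 As) sY (submx1 _)) => /and3P[_ _ ne].
  by rewrite e1 in ne.
Qed.

Lemma fpoints_pointing hi lo L U1 V1 U2 V2 i1 i2 :
  simple_sq As U1 V1 -> simple_sq As U2 V2 -> occurs U1 V1 i1 -> occurs U2 V2 i2 ->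
  fpoints As hi lo L U1 V1 U2 V2 -> exists X W Y, pointing X W Y i1 i2.
Proof.
move=> s1 s2 h1 h2 [X [W [Y [/and4P[sX sW sY /andP[xw wy]] iXW iWY NS _]]]].
have /simple_sqP[sU1 sV1 _ _ _] := s1.
have /simple_sqP[sU2 sV2 _ _ _] := s2.
have [sXW hXW] := iso_sq_occurs s2 h2 sX sW xw (iso_sq_sym sW sU2 sV2 iXW).
have [sWY hWY] := iso_sq_occurs s1 h1 sW sY wy (iso_sq_sym sY sU1 sV1 iWY).
by exists X, W, Y.
Qed.

Section Loewy.
Variables (R T : nat -> 'M[F]_n) (L : nat).
Hypothesis Rf : rad_filt As R.
Hypothesis Tf : soc_filt As T.
Hypothesis LL : loewy_length R L.

Lemma rad0 : (R 0%N == 1%:M)%MS. Proof. by case: Rf. Qed.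
Lemma soc0 : (T 0%N == (0 : 'M[F]_n))%MS. Proof. by case: Tf. Qed.
Lemma radL : (R L == (0 : 'M[F]_n))%MS. Proof. by case: LL. Qed.

Lemma R_is_rad t : is_rad As (R t) (R t.+1). Proof. by case: Rf. Qed.
Lemma T_is_soc t : is_soc_over As (T t) 1%:M (T t.+1). Proof. by case: Tf. Qed.

Lemma submodR t : subm (R t).
Proof.
case: t => [|t]; last by case: (R_is_rad t).
by apply: eqmx_submod (submod1 As); rewrite submx1 andbT; case/andP: rad0.
Qed.

Lemma submodT t : subm (T t).
Proof.
case: t => [|t]; last by case: (T_is_soc t).
by apply: eqmx_submod (submod0 As); rewrite sub0mx /=; case/andP: soc0.
Qed.

Lemma radS t : (R t.+1 <= R t)%MS. Proof. by case: (R_is_rad t). Qed.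
Lemma socS t : (T t <= T t.+1)%MS. Proof. by case: (T_is_soc t) => _ /andP[]. Qed.

Lemma rad_anti a b : (a <= b)%N -> (R b <= R a)%MS.
Proof.
move=> ab; rewrite -(subnKC ab); elim: (b - a)%N => [|m IH]; first by rewrite addn0.
by rewrite addnS; exact: submx_trans (radS _) IH.
Qed.

Lemma soc_mono a b : (a <= b)%N -> (T a <= T b)%MS.
Proof.
move=> ab; rewrite -(subnKC ab); elim: (b - a)%N => [|m IH]; first by rewrite addn0.
by rewrite addnS; exact: submx_trans IH (socS _).
Qed.

Lemma simple_sq_soc t W : simple_sq As (T t) W -> (W <= T t.+1)%MS.
Proof. by case: (T_is_soc t) => _ _ H _ sW; apply: H => //; exact: submx1. Qed.

Lemma simple_sq_rad t W : simple_sq As W (R t) -> (R t.+1 <= W)%MS.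
Proof. by case: (R_is_rad t) => _ _ H _; apply: H. Qed.

Lemma sub_soc_of_simple_cap m X Y : simple_sq As (X :&: Y)%MS X ->
  (X :&: Y <= T m)%MS -> (X <= T m.+1)%MS.
Proof.
move=> sXY xyT; have /simple_sqP[_ sX _ _ maxXY] := sXY.
case: (boolP (X <= T m)%MS) => [xT|nxT]; first exact: submx_trans xT (socS m).
have [||xTxy|xxT] := maxXY (X :&: T m)%MS (submodI sX (submodT m)).
- by rewrite sub_capmx capmxSl xyT.
- exact: capmxSl.
- have sXT : simple_sq As (X :&: T m)%MS X.
    by apply: eqmx_simple_sq _ (eqmxb_refl X) sXY; rewrite xTxy andbT sub_capmx capmxSl.
  by have := simple_sq_soc (simple_sq_adds sXT (submodT m)); rewrite addsmx_sub => /andP[].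
- by case/negP: nxT; apply: submx_trans xxT (capmxSr _ _).
Qed.

Lemma sub_soc_of_bigcap m (Ws : seq 'M[F]_n) P : subm P ->
  (forall W, W \in Ws -> subm W /\ ((P <= W)%MS \/ simple_sq As (P :&: W)%MS P)) ->
  (((\bigcap_(W <- Ws) W) :&: P)%MS <= T m)%MS -> (P <= T m.+1)%MS.
Proof.
elim: Ws P => [|W Ws IH] P sP HW.
  rewrite big_nil => h; apply: submx_trans (socS m); apply: submx_trans h.
  by rewrite sub_capmx submx1 submx_refl.
rewrite big_cons => hI.
set I := (\bigcap_(W0 <- Ws) W0)%MS in hI *.
have [sW hWP] := HW W (mem_head _ _).
have HWs : forall W0, W0 \in Ws -> subm W0 /\ ((P <= W0)%MS \/ simple_sq As (P :&: W0)%MS P).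
  by move=> W0 h; apply: HW; rewrite in_cons h orbT.
case: hWP => [pW|sPW]; first by apply: IH => //; apply: submx_trans hI; submx_lattice.
have hPW : (P :&: W <= T m.+1)%MS.
  apply: IH; first exact: submodI.
    move=> W0 h; have [sW0 [h0|h0]] := HWs W0 h; split => //.
      by left; exact: submx_trans (capmxSl _ _) h0.
    case: (simple_sq_cap h0 (submodI sP sW) (capmxSl _ _)) => [h1|h1].
      by left; exact: submx_trans h1 (capmxSr _ _).
    by right; apply: eqmx_simple_sq _ (eqmxb_refl _) h1; submx_lattice.
  by apply: submx_trans hI; submx_lattice.
set Q := (I :&: P)%MS.
have sQ : subm Q by apply: submodI sP; apply: submod_bigcap => W0 h; case: (HWs W0 h).
case: (boolP (Q <= P :&: W)%MS) => [qPW|nqPW].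
  by apply: IH => //; apply: submx_trans hI; move: qPW; rewrite /Q => qPW; submx_lattice.
case: (simple_sq_cap sPW sQ (capmxSr _ _)) => [qPW|sQW]; first by rewrite qPW in nqPW.
have hQ : (Q <= T m.+1)%MS.
  by apply: sub_soc_of_simple_cap sQW _; apply: submx_trans hI; rewrite /Q; submx_lattice.
have /simple_sqP[_ _ _ _ maxPW] := sPW.
have [||qPW|pQ] := maxPW (Q + P :&: W)%MS (submodD sQ (submodI sP sW)).
- exact: addsmxSr.
- by rewrite addsmx_sub capmxSr capmxSl.
- by case/negP: nqPW; apply: submx_trans qPW; exact: addsmxSl.
- by apply: submx_trans pQ _; rewrite addsmx_sub hQ hPW.
Qed.

Lemma rad_sub_soc_subn t : (t <= L)%N -> (R (L - t) <= T t)%MS.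
Proof.
elim: t => [_|t IH tL].
  rewrite subn0; case/andP: radL => h _; exact: submx_trans h (sub0mx _ _).
have e : (L - t = (L - t.+1).+1)%N by lia.
have := IH (ltnW tL); rewrite e; set N := R (L - t.+1) => hN.
case: (R_is_rad (L - t.+1)) => _ _ _ [Ws [HWs hI]].
apply: (sub_soc_of_bigcap (Ws := Ws)); first exact: submodR.
  move=> W hW; have sW := HWs W hW; have /simple_sqP[sW' _ wn _ _] := sW.
  split => //; right; apply: eqmx_simple_sq sW; last exact: eqmxb_refl.
  by apply/andP; split; submx_lattice.
exact: submx_trans hI hN.
Qed.

Lemma rad_sub_soc k : (k <= L)%N -> (R k <= T (L - k))%MS.
Proof. by move=> kL; have := rad_sub_soc_subn (leq_subr k L); rewrite subKn. Qed.

Lemma socL : (T L == 1%:M)%MS.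
Proof.
apply/andP; split; first exact: submx1.
have := rad_sub_soc (leq0n L); rewrite subn0; apply: submx_trans.
by case/andP: rad0.
Qed.

Definition rad_layer i d := occurs (R d.+1) (R d) i.
Definition soc_layer i d := occurs (T d) (T d.+1) i.

Lemma rad_layer_ex i : (i < len)%N -> exists2 d, (d < L)%N & rad_layer i d.
Proof.
move=> il.
have b0 : covers i (R 0%N) by apply: covers1; case/andP: rad0.
have bL : ~~ covers i (R L) by apply: contra (covers0 il); apply: coversS; case/andP: radL.
have [d dL /andP[h1 h2]] := ex_falling_edge (b := fun t => covers i (R t)) b0 bL.
by exists d => //; rewrite /rad_layer /occurs il h1 h2.
Qed.

Lemma soc_layer_ex i : (i < len)%N -> exists2 d, (d < L)%N & soc_layer i d.
Proof.
move=> il.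
have b0 : ~~ covers i (T 0%N) by apply: contra (covers0 il); apply: coversS; case/andP: soc0.
have bL : ~~ ~~ covers i (T L) by rewrite negbK; apply: covers1; case/andP: socL.
have [d dL /andP[h1 h2]] := ex_falling_edge (b := fun t => ~~ covers i (T t)) b0 bL.
by exists d => //; rewrite /soc_layer /occurs il h1; rewrite negbK in h2; rewrite h2.
Qed.

Lemma rad_layer_uniq i a b : rad_layer i a -> rad_layer i b -> a = b.
Proof.
wlog ab : a b / (a <= b)%N.
  by move=> H ha hb; case: (leqP a b) => h; [apply: H | symmetry; apply: H => //; apply: ltnW].
move=> /and3P[_ ea na] /and3P[_ eb nb]; apply/eqP; rewrite eqn_leq ab /=.
rewrite leqNgt; apply/negP => ba; case/negP: na; apply: coversS eb; exact: rad_anti.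
Qed.

Lemma soc_layer_uniq i a b : soc_layer i a -> soc_layer i b -> a = b.
Proof.
wlog ab : a b / (a <= b)%N.
  by move=> H ha hb; case: (leqP a b) => h; [apply: H | symmetry; apply: H => //; apply: ltnW].
move=> /and3P[_ ea na] /and3P[_ eb nb]; apply/eqP; rewrite eqn_leq ab /=.
rewrite leqNgt; apply/negP => ba; case/negP: nb; exact: coversS (soc_mono ba) ea.
Qed.

Lemma rad_layer_lt i d : rad_layer i d -> (d < L)%N.
Proof.
move=> /and3P[il e _]; rewrite ltnNge; apply/negP => Ld; case/negP: (covers0 il).
apply: coversS e; apply: submx_trans (rad_anti Ld) _; by case/andP: radL.
Qed.

Lemma soc_layer_lt i d : soc_layer i d -> (d < L)%N.
Proof.
move=> /and3P[il _ ne]; rewrite ltnNge; apply/negP => Ld; case/negP: ne.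
apply: coversS (soc_mono Ld) _; apply: covers1; by case/andP: socL.
Qed.

Lemma rad_layer_maximal d i : rad_layer i d ->
  exists Q, [/\ simple_sq As Q (R d), (R d.+1 <= Q)%MS & occurs Q (R d) i].
Proof.
move=> h; case: (R_is_rad d) => _ _ _ [Ws [HWs hI]].
have HW : forall W, W \in Ws -> subm W /\ (W <= R d)%MS.
  by move=> W hW; have /simple_sqP[? _ ? _ _] := HWs W hW.
have [Q hQ hi] := occurs_bigcap (submodR d) HW (occursSl hI h).
by exists Q; split; [exact: HWs | apply: simple_sq_rad; exact: HWs | exact: hi].
Qed.

Lemma soc_layer_minimal j i : soc_layer i j ->
  exists K, [/\ simple_sq As (T j) K, (K <= T j.+1)%MS & occurs (T j) K i].
Proof.
move=> h; case: (T_is_soc j) => _ _ _ [Ws [HWs hI]].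
have HW : forall W, W \in Ws -> subm W /\ (T j <= W)%MS.
  by move=> W hW; have [/simple_sqP[_ ? ? _ _] _] := HWs W hW.
have [K hK hi] := occurs_bigsum (submodT j) HW (occursSr hI h).
by exists K; split; rewrite ?simple_sq_soc; case: (HWs K hK).
Qed.

Lemma count_induced_pieces (lo hi : nat -> 'M[F]_n) X W Y i1 i2 a b :
  (forall t, [/\ subm (lo t), subm (hi t) & (lo t <= hi t)%MS]) ->
  (forall t t' j, occurs (lo t) (hi t) j -> occurs (lo t') (hi t') j -> t = t') ->
  (forall j, occurs X Y j ->
     exists2 t, (t < L)%N & occurs (lo t :&: Y + X)%MS (hi t :&: Y + X)%MS j) ->
  pointing X W Y i1 i2 -> (a < L)%N -> (b < L)%N -> a != b ->
  occurs (lo a) (hi a) i1 -> occurs (lo b) (hi b) i2 ->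
  count (fun t => ~~ ((hi t :&: Y) + X <= (lo t :&: Y) + X)%MS) (iota 0 L) = 2%N.
Proof.
move=> Hlh Hu Hc [[sX sW sY xw wy] [sXW h2 sWY h1] _] aL bL ab ha hb.
have back t j : occurs (lo t :&: Y + X)%MS (hi t :&: Y + X)%MS j -> occurs (lo t) (hi t) j.
  by have [slo shi lh] := Hlh t; exact: occurs_restr.
have cov j t : occurs X Y j -> occurs (lo t) (hi t) j ->
    ~~ (hi t :&: Y + X <= lo t :&: Y + X)%MS.
  move=> hj ht; have [t' _ ht'] := Hc j hj.
  by rewrite -(Hu _ _ _ (back _ _ ht') ht); exact: occurs_nsub ht'.
rewrite -(count_iota_pred2 ab aL bL); apply: eq_in_count => t _ /=.
apply/idP/idP; last first.
  by case/orP => /eqP ->; [exact: cov (occursSl xw h1) ha | exact: cov (occursSr wy h2) hb].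
have [slo shi lh] := Hlh t.
move=> hnz; have [j hj] := ex_occurs (submodD (submodI shi sY) sX)
  (addsmxS (capmxS lh (submx_refl Y)) (submx_refl X)) hnz.
have hXY : occurs X Y j.
  apply: (occursSl (addsmxSr _ _)); apply: (occursSr _ hj).
  by rewrite addsmx_sub capmxSr (submx_trans xw wy).
case: (occurs_split xw wy hXY) => hj2.
  by rewrite -(occurs_uniq sXW h2 hj2) in hj; rewrite (Hu _ _ _ (back _ _ hj) hb) eqxx orbT.
by rewrite -(occurs_uniq sWY h1 hj2) in hj; rewrite (Hu _ _ _ (back _ _ hj) ha) eqxx.
Qed.

Lemma occurs_rad_piece X Y j : subm X -> subm Y -> (X <= Y)%MS -> occurs X Y j ->
  exists2 t, (t < L)%N & occurs (R t.+1 :&: Y + X)%MS (R t :&: Y + X)%MS j.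
Proof.
move=> sX sY xy /and3P[jl eY nX].
have b0 : covers j (R 0%N :&: Y + X)%MS.
  apply: coversS eY; case/andP: rad0 => _ h.
  by apply: submx_trans (addsmxSl _ X); rewrite sub_capmx submx_refl (submx_trans (submx1 _) h).
have bL : ~~ covers j (R L :&: Y + X)%MS.
  apply: contra nX; apply: coversS; rewrite addsmx_sub submx_refl andbT.
  apply: submx_trans (capmxSl _ _) _; case/andP: radL => h _; exact: submx_trans h (sub0mx _ _).
have [t tL /andP[h1 h2]] := ex_falling_edge (b := fun t => covers j (R t :&: Y + X)%MS) b0 bL.
by exists t => //; rewrite /occurs jl h1 h2.
Qed.

Lemma occurs_soc_piece X Y j : subm X -> subm Y -> (X <= Y)%MS -> occurs X Y j ->
  exists2 t, (t < L)%N & occurs (T t :&: Y + X)%MS (T t.+1 :&: Y + X)%MS j.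
Proof.
move=> sX sY xy /and3P[jl eY nX].
have b0 : ~~ covers j (T 0%N :&: Y + X)%MS.
  apply: contra nX; apply: coversS; rewrite addsmx_sub submx_refl andbT.
  apply: submx_trans (capmxSl _ _) _; case/andP: soc0 => h _; exact: submx_trans h (sub0mx _ _).
have bL : ~~ ~~ covers j (T L :&: Y + X)%MS.
  rewrite negbK; apply: coversS eY; case/andP: socL => _ h.
  by apply: submx_trans (addsmxSl _ X); rewrite sub_capmx submx_refl (submx_trans (submx1 _) h).
have [t tL /andP[h1 h2]] :=
  ex_falling_edge (b := fun t => ~~ covers j (T t :&: Y + X)%MS) b0 bL.
by exists t => //; rewrite negbK in h2; rewrite /occurs jl h1 h2.
Qed.

Lemma pointing_rad_layer X W Y i1 i2 a b :
  pointing X W Y i1 i2 -> rad_layer i1 a -> rad_layer i2 b -> (a < b)%N.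
Proof.
move=> D ha hb.
have eb : covers i2 (R a) by apply: (pointing_covers D (submodR a)); case/and3P: ha.
have ab : (a <= b)%N.
  rewrite leqNgt; apply/negP => ba; case/and3P: hb => _ _; case/negP.
  exact: coversS (rad_anti ba) eb.
rewrite ltn_neqAle ab andbT; apply/eqP => e; subst b.
have [Q [sQ rq hQ]] := rad_layer_maximal hb.
have /simple_sqP[sQ' _ qr _ _] := sQ.
case: (occurs_split rq qr ha) => h.
  by case/and3P: hQ => _ _; case/negP; apply: (pointing_covers D sQ'); case/and3P: h.
by case/negP: (pointing_neq D); rewrite (occurs_uniq sQ h hQ).
Qed.

Lemma pointing_soc_layer X W Y i1 i2 a b :
  pointing X W Y i1 i2 -> soc_layer i1 a -> soc_layer i2 b -> (b < a)%N.
Proof.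
move=> D ha hb.
have eb : covers i2 (T a.+1) by apply: (pointing_covers D (submodT a.+1)); case/and3P: ha.
have ab : (b <= a)%N.
  rewrite leqNgt; apply/negP => ba; case/and3P: hb => _ _; case/negP.
  exact: coversS (soc_mono ba) eb.
rewrite ltn_neqAle ab andbT; apply/eqP => e; subst b.
have [K [sK kt hK]] := soc_layer_minimal ha.
have /simple_sqP[_ sK' tk _ _] := sK.
have e2 : covers i2 K by apply: (pointing_covers D sK'); case/and3P: hK.
have h2 : occurs (T a) K i2 by case/and3P: hb => il _ ne; rewrite /occurs il e2 ne.
by case/negP: (pointing_neq D); rewrite (occurs_uniq sK hK h2).
Qed.

Lemma pointing_rad_points X W Y i1 i2 U1 V1 U2 V2 : pointing X W Y i1 i2 ->
  simple_sq As U1 V1 -> occurs U1 V1 i1 -> simple_sq As U2 V2 -> occurs U2 V2 i2 ->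
  rad_points As R L U1 V1 U2 V2.
Proof.
move=> D s1 h1 s2 h2; have [[sX sW sY xw wy] [sXW hXW sWY hWY] ns] := D.
have [a aL ha] := rad_layer_ex (occurs_lt hWY).
have [b bL hb] := rad_layer_ex (occurs_lt hXW).
exists X, W, Y; split.
- by rewrite sX sW sY xw wy.
- exact: occurs_iso_sq sXW s2 hXW h2.
- exact: occurs_iso_sq sWY s1 hWY h1.
- exact: ns.
apply: (count_induced_pieces (lo := fun t => R t.+1) (hi := R) _ _ _ D aL bL _ ha hb).
- by move=> t; rewrite submodR submodR radS.
- by move=> t t' j; exact: rad_layer_uniq.
- by move=> j; apply: occurs_rad_piece => //; exact: submx_trans xw wy.
- by rewrite neq_ltn (pointing_rad_layer D ha hb).
Qed.

Lemma pointing_soc_points X W Y i1 i2 U1 V1 U2 V2 : pointing X W Y i1 i2 ->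
  simple_sq As U1 V1 -> occurs U1 V1 i1 -> simple_sq As U2 V2 -> occurs U2 V2 i2 ->
  soc_points As T L U1 V1 U2 V2.
Proof.
move=> D s1 h1 s2 h2; have [[sX sW sY xw wy] [sXW hXW sWY hWY] ns] := D.
have [a aL ha] := soc_layer_ex (occurs_lt hWY).
have [b bL hb] := soc_layer_ex (occurs_lt hXW).
exists X, W, Y; split.
- by rewrite sX sW sY xw wy.
- exact: occurs_iso_sq sXW s2 hXW h2.
- exact: occurs_iso_sq sWY s1 hWY h1.
- exact: ns.
apply: (count_induced_pieces (lo := T) (hi := fun t => T t.+1) _ _ _ D aL bL _ ha hb).
- by move=> t; rewrite submodT submodT socS.
- by move=> t t' j; exact: soc_layer_uniq.
- by move=> j; apply: occurs_soc_piece => //; exact: submx_trans xw wy.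
- by rewrite neq_ltn (pointing_soc_layer D ha hb) orbT.
Qed.

Definition rad_level U V d := exists2 i, occurs U V i & rad_layer i d.
Definition soc_level U V d := exists2 i, occurs U V i & soc_layer i d.

Lemma rad_level_ex U V : simple_sq As U V -> exists d, rad_level U V d.
Proof.
move=> sUV; have [i hi] := simple_occurs sUV.
by have [d _ hd] := rad_layer_ex (occurs_lt hi); exists d, i.
Qed.

Lemma soc_level_ex U V : simple_sq As U V -> exists d, soc_level U V d.
Proof.
move=> sUV; have [i hi] := simple_occurs sUV.
by have [d _ hd] := soc_layer_ex (occurs_lt hi); exists d, i.
Qed.

Lemma rad_points_soc_level U1 V1 U2 V2 b1 b2 :
  simple_sq As U1 V1 -> simple_sq As U2 V2 -> rad_points As R L U1 V1 U2 V2 ->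
  soc_level U1 V1 b1 -> soc_level U2 V2 b2 -> (b2 < b1)%N.
Proof.
move=> s1 s2 pts [i1 h1 hb1] [i2 h2 hb2].
have [X [W [Y D]]] := fpoints_pointing s1 s2 h1 h2 pts.
exact: pointing_soc_layer D hb1 hb2.
Qed.

Lemma soc_points_rad_level U1 V1 U2 V2 a1 a2 :
  simple_sq As U1 V1 -> simple_sq As U2 V2 -> soc_points As T L U1 V1 U2 V2 ->
  rad_level U1 V1 a1 -> rad_level U2 V2 a2 -> (a1 < a2)%N.
Proof.
move=> s1 s2 pts [i1 h1 ha1] [i2 h2 ha2].
have [X [W [Y D]]] := fpoints_pointing s1 s2 h1 h2 pts.
exact: pointing_rad_layer D ha1 ha2.
Qed.

Lemma non_rigid_layers i k : (k <= L)%N -> occurs (R k) (T (L - k)) i ->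
  exists a b, [/\ (a < k)%N, (b < L - k)%N, rad_layer i a & soc_layer i b].
Proof.
move=> kL /and3P[il eT nR].
have cR0 : covers i (R 0%N) by apply: covers1; case/andP: rad0.
have [a ak /andP[h1 h2]] := ex_falling_edge (b := fun t => covers i (R t)) cR0 nR.
have nT0 : ~~ covers i (T 0%N) by apply: contra (covers0 il); apply: coversS; case/andP: soc0.
have cT : ~~ ~~ covers i (T (L - k)) by rewrite negbK.
have [b bk /andP[g1 g2]] := ex_falling_edge (b := fun t => ~~ covers i (T t)) nT0 cT.
exists a, b; split => //; first by rewrite /rad_layer /occurs il h1 h2.
by rewrite negbK in g2; rewrite /soc_layer /occurs il g1 g2.
Qed.

Lemma rad_paths_rigid :
  (forall U V, simple_sq As U V -> forall d, constituent As (R d.+1) (R d) U V ->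
     exists p : nat -> 'M[F]_n * 'M[F]_n,
       ext_path As (rad_points As R L) (L - 1 - d) p /\
       iso_sq As (p 0%N).1 (p 0%N).2 U V) -> rigid R T L.
Proof.
move=> paths k kL; apply/andP; split; first exact: rad_sub_soc.
apply: no_occurs_sub (submodT _) (rad_sub_soc kL) _ => i; apply/negP => hi.
have [a [b [ak bk ha hb]]] := non_rigid_layers kL hi.
have [U [V [sUV _ _ hUV]]] := occurs_simple_sub (submodR _) (submodR _) (radS _) ha.
have cst := occurs_constituent (submodR _) (submodR _) (radS _) ha sUV hUV.
have [p [[Hs Hp] iso0]] := paths U V sUV a cst.
have lb : (L - 1 - a <= b)%N.
  apply: (layer_chain_dec (P := fun k => soc_level (p k).1 (p k).2)).
  - by move=> t tm; exact: soc_level_ex (Hs t tm).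
  - by move=> t b1 b2 tm; exact: rad_points_soc_level (Hs t (ltnW tm)) (Hs t.+1 tm) (Hp t tm).
  by exists i => //; exact: iso_sq_occursV (Hs 0%N (leq0n _)) sUV iso0 hUV.
lia.
Qed.

Lemma soc_paths_rigid :
  (forall U V, simple_sq As U V -> forall d, constituent As (T d) (T d.+1) U V ->
     exists p : nat -> 'M[F]_n * 'M[F]_n,
       ext_path As (soc_points As T L) (L - 1 - d) p /\
       iso_sq As (p (L - 1 - d)%N).1 (p (L - 1 - d)%N).2 U V) -> rigid R T L.
Proof.
move=> paths k kL; apply/andP; split; first exact: rad_sub_soc.
apply: no_occurs_sub (submodT _) (rad_sub_soc kL) _ => i; apply/negP => hi.
have [a [b [ak bk ha hb]]] := non_rigid_layers kL hi.
have [U [V [sUV _ _ hUV]]] := occurs_simple_sub (submodT _) (submodT _) (socS _) hb.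
have cst := occurs_constituent (submodT _) (submodT _) (socS _) hb sUV hUV.
have [p [[Hs Hp] isom]] := paths U V sUV b cst.
have lb : (L - 1 - b <= a)%N.
  apply: (layer_chain_inc (P := fun k => rad_level (p k).1 (p k).2)).
  - by move=> t tm; exact: rad_level_ex (Hs t tm).
  - by move=> t a1 a2 tm; exact: soc_points_rad_level (Hs t (ltnW tm)) (Hs t.+1 tm) (Hp t tm).
  by exists i => //; exact: iso_sq_occursV (Hs _ (leqnn _)) sUV isom hUV.
lia.
Qed.

Lemma soc_layer_top i j : soc_layer i j.+1 ->
  exists W Y, [/\ simple_sq As W Y, occurs W Y i, (W <= T j.+1)%MS, ~~ (W <= T j)%MS &
    forall W', subm W' -> (W' <= Y)%MS -> ~~ (Y <= W')%MS -> (W' <= W)%MS].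
Proof.
move=> hs; have [K [sK kT hK]] := soc_layer_minimal hs.
have /simple_sqP[sT1 sK' tk nkt maxK] := sK.
have [Y [[sY [yk nyT]] minY]] := ex_minmx
  (P := fun S => subm S /\ (S <= K)%MS /\ ~~ (S <= T j.+1)%MS)
  (conj sK' (conj (submx_refl K) nkt)).
have topY W' : subm W' -> (W' <= Y)%MS -> ~~ (Y <= W')%MS -> (W' <= Y :&: T j.+1)%MS.
  move=> sW' w'y nyw'; rewrite sub_capmx w'y /=; apply: contraR nyw' => nw'T.
  exact: minY W' (conj sW' (conj (submx_trans w'y yk) nw'T)) w'y.
set W := (Y :&: T j.+1)%MS.
have sW : subm W by exact: submodI.
have wy : (W <= Y)%MS by exact: capmxSl.
have sWY : simple_sq As W Y.
  apply: simple_sqI => //; first by apply: contra nyT; rewrite sub_capmx => /andP[].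
  move=> S sS ws sy; case: (boolP (Y <= S)%MS) => [ys|nys]; first by right.
  by left; exact: topY.
have kyt : (K <= Y + T j.+1)%MS.
  case: (maxK (Y + T j.+1)%MS (submodD sY sT1) (addsmxSr _ _)) => [|h|//].
    by rewrite addsmx_sub yk tk.
  by case/negP: nyT; apply: submx_trans h; exact: addsmxSl.
have iso1 : iso_sq As (T j.+1) K W Y.
  by apply: iso_sq_sym => //; apply: iso_sq_id => //; exact: capmxSr.
have [_ hWY] := iso_sq_occurs sK hK sW sY wy iso1.
exists W, Y; split; [by [] | by [] | exact: capmxSr | | exact: topY].
apply/negP => wT.
have sYT : simple_sq As (Y :&: T j)%MS Y.
  apply: eqmx_simple_sq _ (eqmxb_refl Y) sWY.
  by rewrite sub_capmx wy wT /=; apply: capmxS => //; exact: socS.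
have := simple_sq_soc (simple_sq_adds sYT (submodT j)); rewrite addsmx_sub => /andP[yT _].
by rewrite yT in nyT.
Qed.

Lemma rad_layer_bottom i d : rad_layer i d.+1 ->
  exists X W, [/\ simple_sq As X W, occurs X W i, (R d.+1 <= W)%MS, ~~ (R d <= W)%MS &
    forall W', subm W' -> (X <= W')%MS -> ~~ (W' <= X)%MS -> (W <= W')%MS].
Proof.
move=> hr; have [Q [sQ rq hQ]] := rad_layer_maximal hr.
have /simple_sqP[sQ' sR1 qr nrq maxQ] := sQ.
have [X [[sX [qx nrx]] maxX]] := ex_maxmx
  (P := fun S => subm S /\ (Q <= S)%MS /\ ~~ (R d.+1 <= S)%MS)
  (conj sQ' (conj (submx_refl Q) nrq)).
set W := (X + R d.+1)%MS.
have sW : subm W by exact: submodD.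
have xw : (X <= W)%MS by exact: addsmxSl.
have rxq : (R d.+1 :&: X <= Q)%MS.
  case: (maxQ (R d.+1 :&: X)%MS (submodI sR1 sX)) => [||//|h].
  - by rewrite sub_capmx qr qx.
  - exact: capmxSl.
  by case/negP: nrx; apply: submx_trans h (capmxSr _ _).
have sXW : simple_sq As X W.
  have h1 : simple_sq As (R d.+1 :&: X)%MS (R d.+1).
    by apply: eqmx_simple_sq _ (eqmxb_refl _) sQ; rewrite sub_capmx qr qx rxq.
  by apply: eqmx_simple_sq (simple_sq_adds h1 sX); rewrite /W; submx_lattice.
have iso1 : iso_sq As Q (R d.+1) X W.
  apply: iso_sq_id => //; first exact: addsmxSr.
  by rewrite /W addsmxC submx_refl.
have [_ hXW] := iso_sq_occurs sQ hQ sX sW xw iso1.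
exists X, W; split; [by [] | by [] | exact: addsmxSr | |].
- apply/negP => rw; case/negP: nrx.
  case: (simple_sq_cap sXW (submodR d) rw) => h; first exact: submx_trans (radS _) h.
  exact: submx_trans (simple_sq_rad h) (capmxSr _ _).
- move=> W' sW' xw' nw'x; rewrite /W addsmx_sub xw' /=; apply: contraR nw'x => nrw'.
  exact: maxX W' (conj sW' (conj (submx_trans qx xw') nrw')) xw'.
Qed.

Lemma rigid_rad_step i d : rigid R T L -> rad_layer i d -> (d.+1 < L)%N ->
  exists X W Y i2, pointing X W Y i i2 /\ rad_layer i2 d.+1.
Proof.
move=> rig hd dL.
have e0 : (L - d = (L - d.+2).+2)%N by lia.
have e1 : (L - d.+1 = (L - d.+2).+1)%N by lia.
set J := (L - d.+2)%N in e0 e1 *.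
have E0 : (R d == T J.+2)%MS by rewrite -e0; apply: rig; lia.
have E1 : (R d.+1 == T J.+1)%MS by rewrite -e1; apply: rig; lia.
have E2 : (R d.+2 == T J)%MS by apply: rig; lia.
have [W [Y [sWY hWY wT nwT topY]]] := soc_layer_top (eqmx_occurs E1 E0 hd).
have /simple_sqP[sW sY wy _ _] := sWY.
have nwwT : ~~ (W <= W :&: T J)%MS by apply: contra nwT; rewrite sub_capmx => /andP[].
have [X [sX wtx sXW]] := ex_simple_quotient (submodI sW (submodT J)) sW (capmxSl _ _) nwwT.
have /simple_sqP[_ _ xw _ _] := sXW.
have [i2 hXW] := simple_occurs sXW.
exists X, W, Y, i2; split.
  split=> //; apply: nonsplit_top sXW sWY _ => W' sW' _; exact: topY W' sW'.
apply: eqmx_occurs (eqmxb_sym E2) (eqmxb_sym E1) _.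
apply: (occurs_capmx (Y := W)) (submodT _) (submodT _) sW (socS _) _.
have ea : (W :&: T J == T J :&: W)%MS by submx_lattice.
have eb : (W == T J.+1 :&: W)%MS by rewrite sub_capmx wT submx_refl capmxSr.
exact: eqmx_occurs ea eb (occursSl wtx hXW).
Qed.

Lemma rigid_soc_step i j : rigid R T L -> soc_layer i j -> (j.+1 < L)%N ->
  exists X W Y i3, pointing X W Y i3 i /\ soc_layer i3 j.+1.
Proof.
move=> rig hj jL.
have e0 : (L - (L - j.+2) = j.+2)%N by lia.
have e1 : (L - (L - j.+2).+1 = j.+1)%N by lia.
have e2 : (L - (L - j.+2).+2 = j)%N by lia.
set D := (L - j.+2)%N in e0 e1 e2 *.
have E0 : (R D == T j.+2)%MS by rewrite -e0; apply: rig; lia.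
have E1 : (R D.+1 == T j.+1)%MS by rewrite -e1; apply: rig; lia.
have E2 : (R D.+2 == T j)%MS by rewrite -e2; apply: rig; lia.
have [X [W [sXW hXW rw nrw botW]]] :=
  rad_layer_bottom (eqmx_occurs (eqmxb_sym E2) (eqmxb_sym E1) hj).
have /simple_sqP[sX sW xw _ _] := sXW.
have nWW : ~~ (W + R D <= W)%MS by apply: contra nrw; rewrite addsmx_sub => /andP[].
have [Y [sY yb sWY]] := ex_simple_sub sW (submodD sW (submodR D)) (addsmxSl _ _) nWW.
have /simple_sqP[_ _ wy _ _] := sWY.
have [i3 hWY] := simple_occurs sWY.
exists X, W, Y, i3; split.
  split=> //; apply: nonsplit_bottom sXW sWY _ => W' sW' xw' _; exact: botW W' sW' xw'.
apply: eqmx_occurs E1 E0 _.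
apply: (occurs_addsmx (X := W)) (submodR _) (submodR _) sW (radS _) _.
have ea : (W == R D.+1 + W)%MS by rewrite addsmxSr addsmx_sub rw submx_refl.
have eb : (W + R D == R D + W)%MS by submx_lattice.
exact: eqmx_occurs ea eb (occursSr yb hWY).
Qed.

Lemma rigid_rad_path m : rigid R T L -> forall U V i d,
  simple_sq As U V -> occurs U V i -> rad_layer i d -> (d + m < L)%N ->
  exists p : nat -> 'M[F]_n * 'M[F]_n,
    ext_path As (rad_points As R L) m p /\ p 0%N = (U, V).
Proof.
move=> rig; elim: m => [|m IH] U V i d sUV hUV hd dm.
  by exists (fun _ => (U, V)); split => //; split => //= k _.
have dL : (d.+1 < L)%N by lia.
have [X [W [Y [i2 [D hd2]]]]] := rigid_rad_step rig hd dL.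
have [_ [sXW hXW _ _] _] := D.
have dm' : (d.+1 + m < L)%N by lia.
have [p [[Hs Hp] p0]] := IH X W i2 d.+1 sXW hXW hd2 dm'.
exists (fun k => if k is k'.+1 then p k' else (U, V)); split => //; split.
  by case=> [_|k km] //=; apply: Hs.
case=> [_|k km] /=; last exact: Hp.
by rewrite p0; exact: pointing_rad_points D sUV hUV sXW hXW.
Qed.

Lemma rigid_soc_path m : rigid R T L -> forall U V i j,
  simple_sq As U V -> occurs U V i -> soc_layer i j -> (j + m < L)%N ->
  exists p : nat -> 'M[F]_n * 'M[F]_n,
    ext_path As (soc_points As T L) m p /\ p m = (U, V).
Proof.
move=> rig; elim: m => [|m IH] U V i j sUV hUV hj jm.
  by exists (fun _ => (U, V)); split => //; split => //= k _.
have jL : (j.+1 < L)%N by lia.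
have [X [W [Y [i3 [D hj3]]]]] := rigid_soc_step rig hj jL.
have [_ [_ _ sWY hWY] _] := D.
have jm' : (j.+1 + m < L)%N by lia.
have [p [[Hs Hp] pm]] := IH W Y i3 j.+1 sWY hWY hj3 jm'.
exists (fun k => if k == m.+1 then (U, V) else p k); split; last by rewrite eqxx.
split=> k km /=.
  case: eqP => [_|ne]; first exact: sUV.
  by apply: Hs; rewrite -ltnS ltn_neqAle (introN eqP ne).
rewrite (ltn_eqF km) eqSS; case: eqP => [->|ne].
  by rewrite pm; exact: pointing_soc_points D sWY hWY sUV hUV.
by apply: Hp; rewrite ltn_neqAle (introN eqP ne) -ltnS.
Qed.

Lemma rigid_iff_rad_paths :
  rigid R T L <->
  (forall U V, simple_sq As U V -> forall d, constituent As (R d.+1) (R d) U V ->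
     exists p : nat -> 'M[F]_n * 'M[F]_n,
       ext_path As (rad_points As R L) (L - 1 - d) p /\
       iso_sq As (p 0%N).1 (p 0%N).2 U V).
Proof.
split=> [rig U V sUV d cst|]; last exact: rad_paths_rigid.
have [i hi] := simple_occurs sUV.
have hd : rad_layer i d := constituent_occurs sUV hi cst.
have dm : (d + (L - 1 - d) < L)%N by have := rad_layer_lt hd; lia.
have [p [hp p0]] := rigid_rad_path rig sUV hi hd dm.
by exists p; split => //; rewrite p0; exact: iso_sq_refl.
Qed.

Lemma rigid_iff_soc_paths :
  rigid R T L <->
  (forall U V, simple_sq As U V -> forall d, constituent As (T d) (T d.+1) U V ->
     exists p : nat -> 'M[F]_n * 'M[F]_n,
       ext_path As (soc_points As T L) (L - 1 - d) p /\
       iso_sq As (p (L - 1 - d)%N).1 (p (L - 1 - d)%N).2 U V).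
Proof.
split=> [rig U V sUV d cst|]; last exact: soc_paths_rigid.
have [i hi] := simple_occurs sUV.
have hd : soc_layer i d := constituent_occurs sUV hi cst.
have dm : (d + (L - 1 - d) < L)%N by have := soc_layer_lt hd; lia.
have [p [hp pm]] := rigid_soc_path rig sUV hi hd dm.
by exists p; split => //; rewrite pm; exact: iso_sq_refl.
Qed.

End Loewy.
End CompositionSeries.

Theorem proposition4p6 (F : fieldType) (n : nat) (As : seq 'M[F]_n)
    (R T : nat -> 'M[F]_n) (L : nat) :
  mult_free As -> rad_filt As R -> soc_filt As T -> loewy_length R L ->
  (rigid R T L <->
     forall U V : 'M[F]_n, simple_sq As U V ->
     forall d, constituent As (R d.+1) (R d) U V ->
     exists p : nat -> 'M[F]_n * 'M[F]_n,
       ext_path As (rad_points As R L) (L - 1 - d) p /\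
       iso_sq As (p 0%N).1 (p 0%N).2 U V) /\
  (rigid R T L <->
     forall U V : 'M[F]_n, simple_sq As U V ->
     forall d, constituent As (T d) (T d.+1) U V ->
     exists p : nat -> 'M[F]_n * 'M[F]_n,
       ext_path As (soc_points As T L) (L - 1 - d) p /\
       iso_sq As (p (L - 1 - d)%N).1 (p (L - 1 - d)%N).2 U V).
Proof.
move=> [len [c [c0 clen cs cmf]]] Rf Tf LL.
split; [exact (rigid_iff_rad_paths c0 clen cs cmf Rf Tf LL)
       | exact (rigid_iff_soc_paths c0 clen cs cmf Rf Tf LL)].
Qed.
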